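(* Let $\alpha\in[0,1)$, $K_\alpha(x,y)=\dfrac{1}{x^2+2\cos(\pi\alpha)xy+y^2}$, $Q_\alpha(x,y)=y+x\cos(\pi\alpha)$, and for integers $p\ge0$ $$T_{\alpha,2p}=(2p)!\sum_{k=0}^p(-1)^{p-k}\binom{p+k}{p-k}(4Q_\alpha^2)^kK_\alpha^{p+k+1},\qquad T_{\alpha,2p+1}=2(2p+1)!\,Q_\alpha\sum_{k=0}^p(-1)^{p+1-k}\binom{p+1+k}{p-k}(4Q_\alpha^2)^kK_\alpha^{p+k+2}.$$ Then for every $j\ge1$ and $r\ge0$, $$\frac{\partial^jT_{\alpha,r}}{\partial x^j}(1,0+)=(-1)^j\frac{(r+j+1)!}{(r+1)!}\,T_{\alpha,r}(1,0+).$$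
   Context: For a function $F(x,y)$ smooth on $(0,\infty)\times[0,\infty)$, $F(1,0+)$ denotes $\lim_{y\to0+}F(1,y)$. *)

From Stdlib Require Import Reals Factorial Binomial.
From Coquelicot Require Import Coquelicot.
Open Scope R_scope.

Definition Kal (alpha x y : R) : R :=
  / (x ^ 2 + 2 * cos (PI * alpha) * x * y + y ^ 2).

Definition Qal (alpha x y : R) : R := y + x * cos (PI * alpha).

Definition T_even (alpha : R) (p : nat) (x y : R) : R :=
  INR (fact (2 * p)) *
  sum_f_R0 (fun k => (-1) ^ (p - k) * Binomial.C (p + k) (p - k)
                      * (4 * Qal alpha x y ^ 2) ^ k
                      * Kal alpha x y ^ (p + k + 1)) p.

Definition T_odd (alpha : R) (p : nat) (x y : R) : R :=
  2 * INR (fact (2 * p + 1)) * Qal alpha x y *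
  sum_f_R0 (fun k => (-1) ^ (p + 1 - k) * Binomial.C (p + 1 + k) (p - k)
                      * (4 * Qal alpha x y ^ 2) ^ k
                      * Kal alpha x y ^ (p + k + 2)) p.

Definition Tal (alpha : R) (r : nat) (x y : R) : R :=
  if Nat.even r then T_even alpha (Nat.div2 r) x y
  else T_odd alpha (Nat.div2 r) x y.

From Stdlib Require Import Reals Factorial Binomial Lra Lia Psatz.
From Coquelicot Require Import Coquelicot.
Open Scope R_scope.

(* At y = 0 we have K = x^(-2) and Q = x cos(pi alpha), so each summand of T_{alpha,r}(x,0)
   is a constant multiple of x^(-(r+2)): T(x,0) = T(1,0) x^(-(r+2)), whose j-th derivative
   at x = 1 is (-1)^j (r+j+1)!/(r+1)! T(1,0).  To pass to the limit y -> 0+, note that T is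
   built from x, y and K by sums and products and K is smooth near (1,0), so every
   x-derivative of T at x = 1 is continuous in y at 0. *)

Section XRegular.

Variables x0 y0 : R.

(* Only x-derivatives are required, and each only continuous in y along x = x0: this is
   exactly what passing to the limit y -> y0 in [Derive_n (fun x => F x y) n x0] needs. *)
Fixpoint x_regular (n : nat) (F : R -> R -> R) : Prop :=
  continuous (fun y => F x0 y) y0 /\
  match n with
  | O => True
  | S m => exists F' : R -> R -> R,
      locally_2d (fun x y => is_derive (fun t => F t y) x (F' x y)) x0 y0 /\
      x_regular m F'
  end.

Lemma x_regular_S n F : x_regular (S n) F -> x_regular n F.
Proof.
  revert F; induction n as [|n IH]; intros F [HFc [F' [HdF HF']]].
  - now split.
  - split; [exact HFc|]. exists F'. split; [exact HdF | now apply IH].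
Qed.

Lemma x_regular_plus n F G :
  x_regular n F -> x_regular n G -> x_regular n (fun x y => F x y + G x y).
Proof.
  revert F G; induction n as [|n IH]; intros F G [HFc HF] [HGc HG].
  - split; [now apply (continuous_plus (fun y => F x0 y) (fun y => G x0 y)) | exact I].
  - destruct HF as [F' [HdF HF']], HG as [G' [HdG HG']].
    split; [now apply (continuous_plus (fun y => F x0 y) (fun y => G x0 y))|].
    exists (fun x y => F' x y + G' x y). split; [|now apply IH].
    apply locally_2d_impl with (2 := locally_2d_and _ _ _ _ HdF HdG).
    apply locally_2d_forall; intros x y [Hf Hg].
    now apply (is_derive_plus (fun t => F t y) (fun t => G t y)).
Qed.

Lemma x_regular_mult n F G :
  x_regular n F -> x_regular n G -> x_regular n (fun x y => F x y * G x y).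
Proof.
  revert F G; induction n as [|n IH]; intros F G HF HG.
  - split; [now apply (continuous_mult (fun y => F x0 y) (fun y => G x0 y)); [apply HF | apply HG] | exact I].
  - pose proof (x_regular_S _ _ HF) as HF0; pose proof (x_regular_S _ _ HG) as HG0.
    destruct HF as [HFc [F' [HdF HF']]], HG as [HGc [G' [HdG HG']]].
    split; [now apply (continuous_mult (fun y => F x0 y) (fun y => G x0 y))|].
    exists (fun x y => F' x y * G x y + F x y * G' x y).
    split; [|apply x_regular_plus; now apply IH].
    apply locally_2d_impl with (2 := locally_2d_and _ _ _ _ HdF HdG).
    apply locally_2d_forall; intros x y [Hf Hg].
    apply (is_derive_mult (fun t => F t y) (fun t => G t y)); auto.
    intros; apply Rmult_comm.
Qed.

Lemma x_regular_const n c : x_regular n (fun _ _ => c).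
Proof.
  revert c; induction n as [|n IH]; intros c; (split; [apply continuous_const|]); [exact I|].
  exists (fun _ _ => 0). split; [|apply IH].
  apply locally_2d_forall; intros; auto_derive; auto.
Qed.

Lemma x_regular_x n : x_regular n (fun x _ => x).
Proof.
  destruct n as [|n]; (split; [apply continuous_const|]); [exact I|].
  exists (fun _ _ => 1). split; [|apply x_regular_const].
  apply locally_2d_forall; intros; auto_derive; auto.
Qed.

Lemma x_regular_y n : x_regular n (fun _ y => y).
Proof.
  destruct n as [|n]; (split; [apply continuous_id|]); [exact I|].
  exists (fun _ _ => 0). split; [|apply x_regular_const].
  apply locally_2d_forall; intros; auto_derive; auto.
Qed.

Lemma x_regular_pow n F k : x_regular n F -> x_regular n (fun x y => F x y ^ k).
Proof.
  intros HF; induction k as [|k IH]; [exact (x_regular_const n 1)|].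
  now apply (x_regular_mult n F (fun x y => F x y ^ k)).
Qed.

Lemma x_regular_sum n (G : nat -> R -> R -> R) p :
  (forall k, x_regular n (G k)) ->
  x_regular n (fun x y => sum_f_R0 (fun k => G k x y) p).
Proof.
  intros HG; induction p as [|p IH]; [apply HG|].
  now apply (x_regular_plus n (fun x y => sum_f_R0 (fun k => G k x y) p) (G (S p))).
Qed.

Lemma x_regular_Derive_n_loc n F : x_regular n F ->
  exists Fn : R -> R -> R,
    locally_2d (fun x y => Derive_n (fun t => F t y) n x = Fn x y) x0 y0 /\
    continuous (fun y => Fn x0 y) y0.
Proof.
  revert F; induction n as [|n IH]; intros F [HFc HF].
  - exists F. split; [now apply locally_2d_forall | exact HFc].
  - destruct HF as [F' [HdF HF']]. destruct (IH F' HF') as [Fn [HeqF' HFn]].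
    exists Fn. split; [|exact HFn].
    apply locally_2d_impl_strong with (2 := locally_2d_and _ _ _ _ HdF HeqF').
    apply locally_2d_forall; intros x y Hxy.
    rewrite <- (proj2 (locally_2d_singleton _ _ _ Hxy)).
    replace (S n) with (n + 1)%nat by lia.
    rewrite <- Derive_n_comp. apply Derive_n_ext_loc.
    apply (filter_imp (fun t => is_derive (fun s => F s y) t (F' t y) /\
                                Derive_n (fun s => F' s y) n t = Fn t y)).
    + intros t [Hd _]. now apply is_derive_unique.
    + exact (locally_2d_1d_const_y _ _ _ Hxy).
Qed.

Lemma x_regular_Derive_n_continuous n F : x_regular n F ->
  filterlim (fun y => Derive_n (fun x => F x y) n x0) (locally y0)
    (locally (Derive_n (fun x => F x y0) n x0)).
Proof.
  intros HF. destruct (x_regular_Derive_n_loc n F HF) as [Fn [Heq HFn]].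
  rewrite (locally_2d_singleton _ _ _ Heq).
  apply filterlim_ext_loc with (2 := HFn).
  apply (filter_imp _ _ (fun y H => eq_sym H)).
  exact (locally_2d_1d_const_x _ _ _ Heq).
Qed.

End XRegular.

Ltac x_regular_tac :=
  match goal with
  | |- x_regular _ _ _ (fun x y => ?c) => apply x_regular_const
  | |- x_regular _ _ _ (fun x y => x) => apply x_regular_x
  | |- x_regular _ _ _ (fun x y => y) => apply x_regular_y
  | |- x_regular _ _ _ (fun x y => @?A x y + @?B x y) =>
      apply (x_regular_plus _ _ _ A B); x_regular_tac
  | |- x_regular _ _ _ (fun x y => @?A x y * @?B x y) =>
      apply (x_regular_mult _ _ _ A B); x_regular_tac
  | |- x_regular _ _ _ (fun x y => @?A x y ^ ?k) =>
      apply (x_regular_pow _ _ _ A k); x_regular_tac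
  | |- x_regular _ _ _ (fun x y => sum_f_R0 (fun k => @?G k x y) ?p) =>
      apply (x_regular_sum _ _ _ G p); intro; cbv beta; x_regular_tac
  | _ => assumption
  end.

Lemma Kal_denom_pos c x y : -1 <= c <= 1 -> Rabs (x - 1) < /10 -> Rabs y < /10 ->
  0 < x ^ 2 + 2 * c * x * y + y ^ 2.
Proof.
  intros Hc Hx Hy. apply Rabs_def2 in Hx. apply Rabs_def2 in Hy.
  assert (0 < x + c * y) by nra.
  nra.
Qed.

Lemma x_regular_Kal alpha n : x_regular 1 0 n (Kal alpha).
Proof.
  set (c := cos (PI * alpha)). assert (Hc : -1 <= c <= 1) by apply COS_bound.
  induction n as [|n IH];
    (split; [apply (@ex_derive_continuous R_AbsRing R_NormedModule);
             unfold Kal; auto_derive; nra|]); [exact I|].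
  exists (fun x y => (-2) * (x + c * y) * Kal alpha x y ^ 2). split; [|x_regular_tac].
  exists (mkposreal (/10) ltac:(lra)). simpl; intros x y Hx Hy.
  pose proof (Kal_denom_pos c x y Hc Hx ltac:(now rewrite Rminus_0_r in Hy)).
  unfold Kal; fold c. auto_derive; [lra | field; lra].
Qed.

Lemma x_regular_Tal alpha r n : x_regular 1 0 n (Tal alpha r).
Proof.
  pose proof (x_regular_Kal alpha n).
  unfold Tal; destruct (Nat.even r); [unfold T_even | unfold T_odd]; unfold Qal; x_regular_tac.
Qed.

Lemma is_derive_inv_pow n x : x <> 0 ->
  is_derive (fun t => (/ t) ^ S n) x (- INR (S n) * (/ x) ^ S (S n)).
Proof. intros Hx. auto_derive; [exact Hx|]. simpl. field. exact Hx. Qed.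

Lemma Derive_n_inv_pow q k x : 0 < x ->
  Derive_n (fun t => (/ t) ^ S q) k x
  = (-1) ^ k * INR (fact (q + k)) / INR (fact q) * (/ x) ^ (S q + k).
Proof.
  revert x; induction k as [|k IH]; intros x Hx.
  - rewrite !Nat.add_0_r. simpl. field. split; [lra | apply INR_fact_neq_0].
  - simpl Derive_n at 1.
    rewrite (Derive_ext_loc _
      (fun t => (-1) ^ k * INR (fact (q + k)) / INR (fact q) * (/ t) ^ S (q + k))).
    + apply is_derive_unique.
      replace (q + S k)%nat with (S (q + k)) by lia.
      replace (S q + S k)%nat with (S (S (q + k))) by lia.
      rewrite fact_simpl, mult_INR.
      replace ((-1) ^ S k * (INR (S (q + k)) * INR (fact (q + k))) / INR (fact q)
               * (/ x) ^ S (S (q + k)))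
        with ((-1) ^ k * INR (fact (q + k)) / INR (fact q)
              * (- INR (S (q + k)) * (/ x) ^ S (S (q + k))))
        by (simpl pow; field; split; [lra | apply INR_fact_neq_0]).
      apply is_derive_scal, is_derive_inv_pow; lra.
    + apply (filter_imp (fun t => 0 < t)); [exact IH | now apply (open_gt 0)].
Qed.

Lemma Kal_y0 alpha x : x <> 0 -> Kal alpha x 0 = (/ x) ^ 2.
Proof. intros Hx. unfold Kal. field. exact Hx. Qed.

Lemma Qal_y0 alpha x : Qal alpha x 0 = cos (PI * alpha) * x.
Proof. unfold Qal. ring. Qed.

Lemma Tal_sum_y0 alpha (a : nat -> R) p m x : x <> 0 ->
  sum_f_R0 (fun k => a k * (4 * Qal alpha x 0 ^ 2) ^ k * Kal alpha x 0 ^ (p + k + m)) p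
  = sum_f_R0 (fun k => a k * (4 * Qal alpha 1 0 ^ 2) ^ k * Kal alpha 1 0 ^ (p + k + m)) p
    * (/ x) ^ (2 * (p + m)).
Proof.
  intros Hx. rewrite (Rmult_comm (sum_f_R0 _ _)), scal_sum. apply sum_eq; intros k _.
  rewrite !Kal_y0, !Qal_y0, Rinv_1, !pow1 by lra.
  set (c := cos (PI * alpha)).
  replace (4 * (c * x) ^ 2) with (4 * c ^ 2 * x ^ 2) by ring.
  replace (4 * (c * 1) ^ 2) with (4 * c ^ 2) by ring.
  replace (p + k + m)%nat with (k + (p + m))%nat by lia.
  assert (Hxk : x ^ (2 * k) * (/ x) ^ (2 * k) = 1)
    by now rewrite <- Rpow_mult_distr, Rinv_r, pow1.
  rewrite pow_add, Rpow_mult_distr, <- !pow_mult.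
  transitivity (a k * (4 * c ^ 2) ^ k * (x ^ (2 * k) * (/ x) ^ (2 * k)) * (/ x) ^ (2 * (p + m)));
    [ring | now rewrite Hxk].
Qed.

Lemma Tal_y0 alpha r x : x <> 0 -> Tal alpha r x 0 = Tal alpha r 1 0 * (/ x) ^ (r + 2).
Proof.
  intros Hx. pose proof (Nat.div2_odd r) as Hr. rewrite <- Nat.negb_even in Hr.
  unfold Tal; destruct (Nat.even r); cbn [negb Nat.b2n] in Hr; [unfold T_even | unfold T_odd];
    set (p := Nat.div2 r) in *.
  - rewrite (Tal_sum_y0 alpha (fun k => (-1) ^ (p - k) * Binomial.C (p + k) (p - k)) p 1 x Hx).
    replace (r + 2)%nat with (2 * (p + 1))%nat by lia. ring.
  - rewrite (Tal_sum_y0 alpha (fun k => (-1) ^ (p + 1 - k) * Binomial.C (p + 1 + k) (p - k)) p 2 x Hx).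
    rewrite !Qal_y0.
    replace (2 * (p + 2))%nat with (S (r + 2)) by lia.
    simpl pow. field. exact Hx.
Qed.

Lemma Derive_n_Tal_y0 alpha r j :
  Derive_n (fun x => Tal alpha r x 0) j 1
  = (-1) ^ j * INR (fact (r + j + 1)) / INR (fact (r + 1)) * Tal alpha r 1 0.
Proof.
  rewrite (Derive_n_ext_loc _ (fun t => Tal alpha r 1 0 * (/ t) ^ S (r + 1))).
  - rewrite Derive_n_scal_l, Derive_n_inv_pow, Rinv_1, pow1 by lra.
    replace (r + 1 + j)%nat with (r + j + 1)%nat by lia. ring.
  - apply (filter_imp (fun t => 0 < t)); [|now apply (open_gt 0); lra].
    intros t Ht. rewrite Tal_y0 by lra. do 3 f_equal. lia.
Qed.

Theorem lemma2 (alpha : R) (halpha : 0 <= alpha < 1) (j r : nat) (hj : (1 <= j)%nat) :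
  exists L : R,
    filterlim (fun y => Tal alpha r 1 y) (at_right 0) (locally L) /\
    filterlim (fun y => Derive_n (fun x => Tal alpha r x y) j 1) (at_right 0)
      (locally ((-1) ^ j * INR (fact (r + j + 1)) / INR (fact (r + 1)) * L)).
Proof.
  exists (Tal alpha r 1 0).
  assert (Hright : filter_le (at_right 0) (locally 0)) by apply filter_le_within.
  split; apply (filterlim_filter_le_1 _ Hright).
  - exact (x_regular_Derive_n_continuous 1 0 0 _ (x_regular_Tal alpha r 0)).
  - rewrite <- Derive_n_Tal_y0.
    exact (x_regular_Derive_n_continuous 1 0 j _ (x_regular_Tal alpha r j)).
Qed.
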